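(* Let $\mathbb{H}$ be a reproducing kernel Hilbert space with inner product $\langle\cdot,\cdot\rangle$ and feature map $\phi$, and let $(X,A,Y)$ be jointly distributed with $Y=\langle\phi(X),y\rangle$ and $A=\langle\phi(X),a\rangle$ for some nonzero $y,a\in\mathbb{H}$, with $\operatorname{Var}(Y),\operatorname{Var}(A)>0$. Let $\Sigma:=\operatorname{Cov}(\phi(X),\phi(X))$ be the covariance operator. Then for every (possibly randomized) representation $Z=g(X)$ with $\operatorname{Var}\mathbb{E}[Y\mid Z]=\operatorname{Var}(Y)$, $$\operatorname{Var}\mathbb{E}[A\mid Z]\ge \frac{\langle a,\Sigma y\rangle^2}{\langle y,\Sigma y\rangle}=\operatorname{Var}(A)\cdot\rho_{YA}^2,$$ where $\rho_{YA}$ is the correlation coefficient of $Y$ and $A$.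
   Context: A (possibly randomized) representation is $Z=g(X,S)$ for a measurable $g$ and auxiliary randomness $S$ independent of $(X,A,Y)$. $\phi(X)$ is assumed to have finite second moment in $\mathbb{H}$. *)

From HB Require Import structures.
From mathcomp Require Import all_boot all_order all_algebra.
From mathcomp Require Import all_classical all_reals all_analysis.
Set Implicit Arguments. Unset Strict Implicit. Unset Printing Implicit Defensive.
Import Order.TTheory GRing.Theory Num.Theory.
Local Open Scope classical_set_scope.
Local Open Scope ring_scope.

Definition inner_product (R : realType) (V : lmodType R) (ip : V -> V -> R)
  : Prop :=
  [/\ (forall u v, ip u v = ip v u),
      (forall (c : R) u v w, ip (c *: u + v) w = c * ip u w + ip v w),
      (forall u, 0 <= ip u u) &
      (forall u, ip u u = 0 -> u = 0)].

(* completeness w.r.t. the norm sqrt (ip u u) (stated with squared norms) *)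
Definition ip_complete (R : realType) (V : lmodType R) (ip : V -> V -> R)
  : Prop :=
  forall u : nat -> V,
    (forall e : R, 0 < e -> exists N : nat, forall m n : nat,
        (N <= m)%N -> (N <= n)%N -> ip (u m - u n) (u m - u n) < e) ->
    exists l : V, forall e : R, 0 < e -> exists N : nat, forall n : nat,
        (N <= n)%N -> ip (u n - l) (u n - l) < e.

(* (V, ip) is a reproducing kernel Hilbert space of real functions on Tx,
   realized through the injective evaluation map ev : V -> (Tx -> R), with
   feature map phi (phi x = k(x, .)) satisfying the reproducing property
   f(x) = <f, phi x>. *)
Definition is_rkhs (R : realType) (V : lmodType R) (Tx : Type)
  (ip : V -> V -> R) (ev : V -> Tx -> R) (phi : Tx -> V) : Prop :=
  [/\ inner_product ip, ip_complete ip, injective ev &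
      (forall f x, ev f x = ip f (phi x))].

Definition indep_rv (d : measure_display) (T : measurableType d) (R : realType)
  (P : probability T R) (d1 d2 : measure_display)
  (T1 : measurableType d1) (T2 : measurableType d2)
  (U : T -> T1) (W : T -> T2) : Prop :=
  forall (B : set T1) (C : set T2), measurable B -> measurable C ->
    P (U @^-1` B `&` W @^-1` C) = (P (U @^-1` B) * P (W @^-1` C))%E.

(* W is a version of the conditional expectation E[F | Z]:
   W is sigma(Z)-measurable (W = h o Z with h measurable), integrable,
   and has the same integrals as F over every event {Z \in B}. *)
Definition is_cond_exp (d : measure_display) (T : measurableType d)
  (R : realType) (P : probability T R) (dz : measure_display)
  (Tz : measurableType dz) (Z : T -> Tz) (F W : T -> R) : Prop :=
  [/\ exists h : Tz -> R, measurable_fun setT h /\ W = h \o Z,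
      P.-integrable setT (EFin \o W) &
      forall B : set Tz, measurable B ->
        (\int[P]_(w in Z @^-1` B) (W w)%:E = \int[P]_(w in Z @^-1` B) (F w)%:E)%E].

(* Sigma : V -> V is the covariance operator Cov(phi(X), phi(X)):
   <u, Sigma v> = Cov(<phi(X),u>, <phi(X),v>) for all u, v. *)
Definition is_cov_operator (d : measure_display) (T : measurableType d)
  (R : realType) (P : probability T R) (V : lmodType R) (ip : V -> V -> R)
  (dx : measure_display) (Tx : measurableType dx) (X : T -> Tx)
  (phi : Tx -> V) (Sigma : V -> V) : Prop :=
  forall u v, (ip u (Sigma v))%:E =
    covariance P (fun w => ip (phi (X w)) u) (fun w => ip (phi (X w)) v).

Definition correlation (d : measure_display) (T : measurableType d)
  (R : realType) (P : probability T R) (U W : T -> R) : R :=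
  fine (covariance P U W) / Num.sqrt (fine (variance P U) * fine (variance P W)).

From HB Require Import structures.
From mathcomp Require Import all_boot all_order all_algebra.
From mathcomp Require Import all_classical all_reals all_analysis.
From mathcomp Require Import measurable_realfun ring lra.
Set Implicit Arguments. Unset Strict Implicit. Unset Printing Implicit Defensive.
Import Order.TTheory GRing.Theory Num.Theory.
Import numFieldNormedType.Exports HBNNSimple.
Local Open Scope classical_set_scope.
Local Open Scope ring_scope.

(* Conditional expectation given Z is the L2 projection onto the functions
   h(Z): Cov(F - E[F|Z], h(Z)) = 0, which follows from the defining identity on
   the events {Z in B} by approximating h by simple functions.  Since
   Var E[Y|Z] = Var Y, this gives Var (Y - E[Y|Z]) = 0, hence
   Cov(A, E[Y|Z]) = Cov(A, Y) = <a, Sigma y> by Cauchy-Schwarz, and by the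
   projection property again Cov(E[A|Z], E[Y|Z]) = <a, Sigma y>.  A last
   Cauchy-Schwarz gives <a, Sigma y>^2 <= Var E[A|Z] * <y, Sigma y>. *)

Lemma measurable_preimage d (T : measurableType d) d' (U : measurableType d')
    (f : T -> U) (B : set U) :
  measurable_fun setT f -> measurable B -> measurable (f @^-1` B).
Proof. by move=> mf mB; rewrite -[_ @^-1` _]setTI; exact: mf. Qed.

Section funrposM.
Context {T : Type} {R : realFieldType}.
Implicit Types f g : T -> R.

Let max0E (x : R) : Num.max x 0 = (x + `|x|) / 2.
Proof. by case: ger0P => _; field. Qed.

Lemma funrposM f g : (f \* g)^\+ = f^\+ \* g^\+ \+ f^\- \* g^\-.
Proof.
by apply/funext => x; rewrite /funrpos /funrneg /= !max0E !normrN normrM; field.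
Qed.

Lemma funrnegM f g : (f \* g)^\- = f^\+ \* g^\- \+ f^\- \* g^\+.
Proof.
by apply/funext => x; rewrite /funrpos /funrneg /= !max0E !normrN normrM; field.
Qed.

End funrposM.

Section integral_funrposneg.
Local Open Scope ereal_scope.
Context d (T : measurableType d) (R : realType) (mu : {measure set T -> \bar R}).

Lemma integral_eq0_funrposneg (A : set T) (f : T -> R) :
  measurable A -> mu.-integrable A (EFin \o f) ->
  (\int[mu]_(x in A) (f x)%:E == 0) =
  (\int[mu]_(x in A) (f^\+ x)%:E == \int[mu]_(x in A) (f^\- x)%:E).
Proof.
move=> mA intf; rewrite integralE funerpos funerneg sube_eq ?add0e//.
by rewrite -funerpos; exact: integrable_pos_fin_num.
Qed.

End integral_funrposneg.

Section integral_mul_comp.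
Local Open Scope ereal_scope.
Context d (T : measurableType d) (R : realType) (mu : {measure set T -> \bar R}).
Context dz (Tz : measurableType dz) (Z : T -> Tz).
Hypothesis mZ : measurable_fun setT Z.

Lemma ge0_integral_mul_nnsfun_comp (H : T -> R) (s : {nnsfun Tz >-> R}) :
  measurable_fun setT H -> (forall w, 0 <= H w)%R ->
  \int[mu]_w (H w * s (Z w))%:E =
  \sum_(r \in range s) r%:E * \int[mu]_(w in Z @^-1` (s @^-1` [set r])) (H w)%:E.
Proof.
move=> mH H0.
have mZs r : measurable (Z @^-1` (s @^-1` [set r])).
  exact/measurable_preimage/measurable_funPTI.
transitivity (\sum_(r \in range s)
    \int[mu]_w (r * \1_(Z @^-1` (s @^-1` [set r])) w * H w)%:E).
  rewrite -ge0_integral_fsum//; last 2 first.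
  - move=> r; apply/measurable_EFinP/measurable_funM => //.
    exact/measurable_funM/measurable_indic.
  - move=> r w _; rewrite lee_fin mulr_ge0// indicE.
    by case: (boolP (w \in _)) => [/set_mem /= <-|]; rewrite ?mulr1 ?mulr0.
  apply: eq_integral => w _.
  rewrite [s (Z w)]fimfunE !fsbig_finite//= mulr_sumr sumEFin.
  by congr EFin; apply: eq_bigr => r _; rewrite mulrC.
apply: eq_fsbigr => r /set_mem [z _ <-].
rewrite -ge0_integralZl_EFin//; last 2 first.
- by move=> w _; rewrite lee_fin.
- exact/measurable_EFinP/measurable_funTS.
rewrite [RHS]integral_mkcond; apply: eq_integral => w _; rewrite /patch indicE.
by case: ifP => _; rewrite ?mulr1 ?mulr0 ?mule0 ?mul0r// EFinM.
Qed.

Lemma ge0_integral_mul_comp_approx (k : Tz -> R) :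
  measurable_fun setT k -> (forall z, 0 <= k z)%R ->
  exists s : nat -> {nnsfun Tz >-> R}, forall H : T -> R,
    measurable_fun setT H -> (forall w, 0 <= H w)%R ->
    \int[mu]_w (H w * k (Z w))%:E = limn (fun n => \int[mu]_w (H w * s n (Z w))%:E).
Proof.
move=> mk k0; have mEk : measurable_fun setT (EFin \o k) by exact/measurable_EFinP.
set s := nnsfun_approx measurableT mEk; exists s => H mH H0.
rewrite -monotone_convergence//; last 3 first.
- by move=> n; apply/measurable_EFinP/measurable_funM => //; exact: measurableT_comp.
- by move=> n w _; rewrite lee_fin mulr_ge0.
- by move=> w _ m n mn; rewrite lee_fin ler_wpM2l//; exact/lefP/nd_nnsfun_approx.
apply: eq_integral => w _.
have Hs_cvg : (fun n => H w * s n (Z w))%R @ \oo --> (H w * k (Z w))%R.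
  apply: cvgM; first exact: cvg_cst.
  under eq_fun do rewrite nnsfun_approxE.
  exact: (@cvg_approx _ _ _ setT (EFin \o k) (Z w) (fun z _ => k0 z) Logic.I (ltry _)).
rewrite (_ : (fun n => _) = EFin \o (fun n => H w * s n (Z w))%R)//.
by rewrite EFin_lim ?(cvg_lim _ Hs_cvg)//; exact: cvgP Hs_cvg.
Qed.

Lemma ge0_integral_mul_comp_eq (F G : T -> R) (k : Tz -> R) :
  measurable_fun setT F -> measurable_fun setT G ->
  (forall w, 0 <= F w)%R -> (forall w, 0 <= G w)%R ->
  (forall B, measurable B ->
    \int[mu]_(w in Z @^-1` B) (F w)%:E = \int[mu]_(w in Z @^-1` B) (G w)%:E) ->
  measurable_fun setT k -> (forall z, 0 <= k z)%R ->
  \int[mu]_w (F w * k (Z w))%:E = \int[mu]_w (G w * k (Z w))%:E.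
Proof.
move=> mF mG F0 G0 FG mk k0; have [s sE] := ge0_integral_mul_comp_approx mk k0.
rewrite !sE//; congr (limn _); apply/funext => n.
rewrite !ge0_integral_mul_nnsfun_comp//; apply: eq_fsbigr => r _.
by rewrite FG//; exact: measurable_funPTI.
Qed.

Lemma integral_mul_comp_eq0 (D : T -> R) (k : Tz -> R) :
  mu.-integrable setT (EFin \o D) ->
  (forall B, measurable B -> \int[mu]_(w in Z @^-1` B) (D w)%:E = 0) ->
  measurable_fun setT k -> mu.-integrable setT (EFin \o (D \* (k \o Z))%R) ->
  \int[mu]_w (D w * k (Z w))%:E = 0.
Proof.
move=> iD D0 mk iDk.
have mD : measurable_fun setT D by exact/measurable_EFinP/(measurable_int mu).
have D_pos_neg B : measurable B ->
    \int[mu]_(w in Z @^-1` B) (D^\+ w)%:E = \int[mu]_(w in Z @^-1` B) (D^\- w)%:E.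
  move=> mB; have mZB := measurable_preimage mZ mB.
  apply/eqP; rewrite -integral_eq0_funrposneg ?D0//.
  exact: integrableS measurableT mZB (@subsetT _ _) iD.
have D_pos_neg_mul (k' : Tz -> R) : measurable_fun setT k' -> (forall z, 0 <= k' z)%R ->
    \int[mu]_w (D^\+ w * k' (Z w))%:E = \int[mu]_w (D^\- w * k' (Z w))%:E.
  by move=> mk' k'0; apply: ge0_integral_mul_comp_eq => //;
    [exact: measurable_funrpos|exact: measurable_funrneg].
have mkZ := measurableT_comp mk mZ.
have mEM (f g : T -> R) : measurable_fun setT f -> measurable_fun setT g ->
    measurable_fun setT (fun w => (f w * g w)%:E).
  by move=> mf mg; exact/measurable_EFinP/measurable_funM.
apply/eqP; rewrite (integral_eq0_funrposneg measurableT iDk) funrposM funrnegM /=.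
under eq_integral do rewrite EFinD.
under [X in _ == X]eq_integral do rewrite EFinD.
rewrite !ge0_integralD//; last 8 first.
all: try by move=> w _; rewrite lee_fin mulr_ge0.
all: try by apply: mEM; first [exact: measurable_funrpos | exact: measurable_funrneg].
apply/eqP; rewrite addeC; congr (_ + _).
- by apply/esym/(D_pos_neg_mul k^\-%R); [exact: measurable_funrneg|exact: funrneg_ge0].
- by apply: (D_pos_neg_mul k^\+%R); [exact: measurable_funrpos|exact: funrpos_ge0].
Qed.

End integral_mul_comp.

Section Lfun2.
Local Open Scope ereal_scope.
Context d (T : measurableType d) (R : realType) (mu : {measure set T -> \bar R}).

Lemma integrable_sqr_Lfun2 (f : T -> R) : measurable_fun setT f ->
  mu.-integrable setT (EFin \o (fun x => f x ^+ 2)%R) -> f \in Lfun mu 2%:E.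
Proof.
move=> mf /integrableP[_ f2_lty]; rewrite inE; apply/andP; split; rewrite inE//=.
move: f2_lty; under eq_integral => x _ do rewrite gee0_abs ?lee_fin ?sqr_ge0//.
rewrite /finite_norm unlock /= => f2_lty; apply: poweR_lty.
have normK (r : R) : (`|r| `^ 2 = r ^+ 2)%R.
  by rewrite powR_mulrn// real_normK// num_real.
by under eq_integral do rewrite normK.
Qed.

End Lfun2.

Section variance_covariance.
Local Open Scope ereal_scope.
Context d (T : measurableType d) (R : realType) (P : probability T R).

Let Lfun21 : {subset Lfun P 2%:E <= Lfun P 1}.
Proof. exact/Lfun_subset12/fin_num_measure. Qed.

Lemma Lfun2_of_variance (X : T -> R) : measurable_fun setT X ->
  'V_P[X] \is a fin_num -> X \in Lfun P 2%:E.
Proof.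
move=> mX; rewrite /variance unlock; set c := fine 'E_P[X] => VX.
have mXc : measurable_fun setT (X \- cst c)%R by exact: measurable_funB.
have Xc2 : (X \- cst c)%R \in Lfun P 2%:E.
  apply: integrable_sqr_Lfun2 => //; apply/integrableP; split.
    exact/measurable_EFinP/measurable_funX.
  move: VX; rewrite unlock ge0_fin_numE; last first.
    by apply: integral_ge0 => x _; rewrite lee_fin -expr2 sqr_ge0.
  under eq_integral do rewrite gee0_abs ?lee_fin ?sqr_ge0//.
  exact: id.
rewrite -(subrK (cst c) X).
by apply: rpredD => //; [exact: lee1n|move=> ?; exact: Lfun_cst].
Qed.

Lemma Lfun2_covariance_fin_num (X Y : T -> R) :
  X \in Lfun P 2%:E -> Y \in Lfun P 2%:E -> covariance P X Y \is a fin_num.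
Proof.
by move=> X2 Y2; rewrite covariance_fin_num ?Lfun2_mul_Lfun1 ?Lfun21.
Qed.

Lemma covariance_sqr_le (X Y : T -> R) : X \in Lfun P 2%:E -> Y \in Lfun P 2%:E ->
  (fine (covariance P X Y) ^+ 2 <= fine 'V_P[X] * fine 'V_P[Y])%R.
Proof.
move=> X2 Y2; have NX2 : (\- X)%R \in Lfun P 2%:E by rewrite rpredN.
have := covariance_le X2 Y2; have := covariance_le NX2 Y2.
rewrite varianceN// covarianceNl ?Lfun2_mul_Lfun1 ?Lfun21//.
rewrite -(fineK (Lfun2_covariance_fin_num X2 Y2)).
rewrite -(fineK (variance_fin_num X2)) -(fineK (variance_fin_num Y2)) /=.
set c := fine _; set vX := fine _; set vY := fine _.
rewrite -EFinM !lee_fin => cN_le c_le.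
have vX0 : (0 <= vX)%R by rewrite -lee_fin /vX fineK ?variance_ge0 ?variance_fin_num.
have vY0 : (0 <= vY)%R by rewrite -lee_fin /vY fineK ?variance_ge0 ?variance_fin_num.
have := sqr_sqrtr vX0; have := sqr_sqrtr vY0.
have := sqrtr_ge0 vX; have := sqrtr_ge0 vY.
nra.
Qed.

Lemma covariance_variance0r (X Y : T -> R) : X \in Lfun P 2%:E -> Y \in Lfun P 2%:E ->
  'V_P[Y] = 0 -> covariance P X Y = 0.
Proof.
move=> X2 Y2 VY0; have := covariance_sqr_le X2 Y2; rewrite VY0 mulr0 => c2_le0.
rewrite -(fineK (Lfun2_covariance_fin_num X2 Y2)).
by congr EFin; nra.
Qed.

Lemma sqr_correlation_mul_variance (X Y : T -> R) (c vX vY : R) :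
  covariance P X Y = c%:E -> 'V_P[X] = vX%:E -> 'V_P[Y] = vY%:E ->
  (0 < vX)%R -> (0 < vY)%R ->
  (c ^+ 2 / vX = fine 'V_P[Y] * correlation P X Y ^+ 2)%R.
Proof.
move=> CXY VX VY vX0 vY0; rewrite /correlation CXY VX VY /=.
rewrite expr_div_n sqr_sqrtr ?mulr_ge0 ?ltW//.
by field; rewrite !gt_eqF.
Qed.

End variance_covariance.

Section conditional_expectation.
Local Open Scope ereal_scope.
Context d (T : measurableType d) (R : realType) (P : probability T R).
Context dz (Tz : measurableType dz) (Z : T -> Tz).
Hypothesis mZ : measurable_fun setT Z.

Let Lfun21 : {subset Lfun P 2%:E <= Lfun P 1}.
Proof. exact/Lfun_subset12/fin_num_measure. Qed.

Lemma cond_exp_measurable (F W : T -> R) :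
  is_cond_exp P Z F W -> measurable_fun setT W.
Proof. by case=> -[h [mh ->]] _ _; exact: measurableT_comp. Qed.

Lemma cond_exp_expectation (F W : T -> R) :
  is_cond_exp P Z F W -> 'E_P[W] = 'E_P[F].
Proof. by case=> _ _ /(_ setT measurableT); rewrite !preimage_setT unlock. Qed.

Lemma cond_exp_orthogonal (F W : T -> R) (h : Tz -> R) :
  is_cond_exp P Z F W -> measurable_fun setT h ->
  F \in Lfun P 2%:E -> W \in Lfun P 2%:E -> h \o Z \in Lfun P 2%:E ->
  'E_P[F * (h \o Z)] = 'E_P[W * (h \o Z)].
Proof.
move=> [_ iW WF] mh F2 W2 hZ2.
have iF : P.-integrable setT (EFin \o F) by exact/Lfun1_integrable/Lfun21.
have iFh := (Lfun1_integrable _ _).1 (Lfun2_mul_Lfun1 F2 hZ2).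
have iWh := (Lfun1_integrable _ _).1 (Lfun2_mul_Lfun1 W2 hZ2).
have iFW : P.-integrable setT (EFin \o (F \- W)%R).
  by rewrite (_ : EFin \o _ = (EFin \o F) \- (EFin \o W)); [exact: integrableB|].
have FW0 B : measurable B -> \int[P]_(w in Z @^-1` B) ((F \- W)%R w)%:E = 0.
  move=> mB; have mZB := measurable_preimage mZ mB.
  have iS f : P.-integrable setT f -> P.-integrable (Z @^-1` B) f.
    exact: integrableS measurableT mZB (@subsetT _ _).
  under eq_integral do rewrite /= EFinB.
  rewrite integralB_EFin ?WF ?subee ?iS//.
  exact: integrable_fin_num (iS _ iF).
have iFWh : P.-integrable setT (EFin \o ((F \- W) \* (h \o Z))%R).
  rewrite (_ : EFin \o _ = (EFin \o (F \* (h \o Z))%R) \- (EFin \o (W \* (h \o Z))%R)).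
    exact: integrableB.
  by apply/funext => w /=; rewrite mulrBl EFinB.
have := integral_mul_comp_eq0 mZ iFW FW0 mh iFWh.
under eq_integral do rewrite mulrBl EFinB.
rewrite integralB_EFin// unlock => /eqP; rewrite sube_eq ?add0e => [/eqP//||].
- exact: integrable_fin_num.
- by rewrite fin_num_adde_defl// integrable_fin_num.
Qed.

Lemma cond_exp_covariance (F W : T -> R) (h : Tz -> R) :
  is_cond_exp P Z F W -> measurable_fun setT h ->
  F \in Lfun P 2%:E -> W \in Lfun P 2%:E -> h \o Z \in Lfun P 2%:E ->
  covariance P F (h \o Z) = covariance P W (h \o Z).
Proof.
move=> FW mh F2 W2 hZ2; rewrite !covarianceE ?Lfun2_mul_Lfun1 ?Lfun21//.
by rewrite (cond_exp_orthogonal FW) ?(cond_exp_expectation FW).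
Qed.

Lemma cond_exp_Lfun2 (F W : T -> R) :
  is_cond_exp P Z F W -> 'V_P[W] \is a fin_num -> W \in Lfun P 2%:E.
Proof. by move=> FW; apply: Lfun2_of_variance; exact: cond_exp_measurable FW. Qed.

Lemma covariance_cond_exp_full_variance (Y EY A : T -> R) :
  is_cond_exp P Z Y EY -> Y \in Lfun P 2%:E -> A \in Lfun P 2%:E ->
  'V_P[EY] = 'V_P[Y] -> covariance P A EY = covariance P A Y.
Proof.
move=> YEY Y2 A2 VEY; have [[h [mh EYE]] _ _] := YEY.
have EY2 : EY \in Lfun P 2%:E by rewrite (cond_exp_Lfun2 YEY) // VEY variance_fin_num.
have CYEY : covariance P Y EY = 'V_P[Y].
  by rewrite -VEY /variance [in LHS]EYE (cond_exp_covariance YEY mh) -?EYE.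
have YEY0 : 'V_P[(Y \- EY)%R] = 0.
  rewrite varianceB// CYEY VEY -(fineK (variance_fin_num Y2)).
  by rewrite -EFinM -!EFinD; congr EFin; ring.
have := covarianceBr A2 Y2 EY2.
have YEY2 : (Y \- EY)%R \in Lfun P 2%:E by rewrite rpredB ?lee1n.
rewrite (covariance_variance0r A2 YEY2 YEY0) => /esym/eqP.
by rewrite sube_eq ?add0e ?Lfun2_covariance_fin_num// => /eqP.
Qed.

Lemma cond_exp_variance_ge (Y A EY EA : T -> R) (c v : R) :
  Y \in Lfun P 2%:E -> A \in Lfun P 2%:E ->
  is_cond_exp P Z Y EY -> is_cond_exp P Z A EA -> 'V_P[EY] = 'V_P[Y] ->
  'V_P[Y] = v%:E -> (0 < v)%R -> covariance P Y A = c%:E ->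
  (c ^+ 2 / v)%:E <= 'V_P[EA].
Proof.
move=> Y2 A2 YEY AEA VEY VY v0 CYA.
have [VEA_oo|VEA_fin] : 'V_P[EA] = +oo \/ 'V_P[EA] \is a fin_num.
  by case: 'V_P[EA] (variance_ge0 P EA) => [r||] //; [right|left].
  by rewrite VEA_oo leey.
have EA2 := cond_exp_Lfun2 AEA VEA_fin.
have EY2 : EY \in Lfun P 2%:E by rewrite (cond_exp_Lfun2 YEY) // VEY VY.
have [[h [mh EYE]] _ _] := YEY.
have CEAEY : covariance P EA EY = c%:E.
  rewrite EYE -(cond_exp_covariance AEA mh) -?EYE//.
  by rewrite (covariance_cond_exp_full_variance YEY)// covarianceC.
have := covariance_sqr_le EA2 EY2.
by rewrite CEAEY VEY VY -(fineK VEA_fin) /= lee_fin ler_pdivrMr.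
Qed.

End conditional_expectation.

Theorem theorem4
  (d : measure_display) (T : measurableType d) (R : realType)
  (P : probability T R)
  (V : lmodType R) (ip : V -> V -> R)
  (dx : measure_display) (Tx : measurableType dx)
  (ev : V -> Tx -> R) (phi : Tx -> V)
  (Hrkhs : is_rkhs ip ev phi)
  (Hphi_meas : forall h : V, measurable_fun setT (fun x => ip (phi x) h))
  (X : T -> Tx) (HX : measurable_fun setT X)
  (H2mom : P.-integrable setT (fun w => (ip (phi (X w)) (phi (X w)))%:E))
  (y a : V) (Hy : y <> 0) (Ha : a <> 0)
  (Y A : T -> R)
  (HY : Y = (fun w => ip (phi (X w)) y))
  (HA : A = (fun w => ip (phi (X w)) a))
  (HVY : (0 < 'V_P[Y])%E) (HVA : (0 < 'V_P[A])%E)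
  (Sigma : V -> V) (HSigma : is_cov_operator P ip X phi Sigma)
  (ds : measure_display) (Ts : measurableType ds)
  (S : T -> Ts) (HS : measurable_fun setT S)
  (Hindep : indep_rv P S (fun w => (X w, A w, Y w)))
  (dz : measure_display) (Tz : measurableType dz)
  (g : Tx * Ts -> Tz) (Hg : measurable_fun setT g)
  (Z : T -> Tz) (HZ : Z = (fun w => g (X w, S w)))
  (EY EA : T -> R)
  (HEY : is_cond_exp P Z Y EY) (HEA : is_cond_exp P Z A EA)
  (Hsuff : 'V_P[EY] = 'V_P[Y]) :
  ('V_P[EA] >= ((ip a (Sigma y)) ^+ 2 / ip y (Sigma y))%:E)%E /\
  (ip a (Sigma y)) ^+ 2 / ip y (Sigma y)
    = fine 'V_P[A] * (correlation P Y A) ^+ 2.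
Proof.
have mZ : measurable_fun setT Z.
  by rewrite HZ; apply: measurableT_comp Hg _; exact: measurable_fun_pair.
have VY : 'V_P[Y] = (ip y (Sigma y))%:E by rewrite HSigma HY.
have VA : 'V_P[A] = (ip a (Sigma a))%:E by rewrite HSigma HA.
have CYA : covariance P Y A = (ip a (Sigma y))%:E.
  by rewrite covarianceC HSigma HA HY.
have vY0 : 0 < ip y (Sigma y) by rewrite -lte_fin -VY.
have vA0 : 0 < ip a (Sigma a) by rewrite -lte_fin -VA.
have Y2 : Y \in Lfun P 2%:E.
  apply: Lfun2_of_variance; last by rewrite VY.
  by rewrite HY; exact: measurableT_comp (Hphi_meas y) HX.
have A2 : A \in Lfun P 2%:E.
  apply: Lfun2_of_variance; last by rewrite VA.
  by rewrite HA; exact: measurableT_comp (Hphi_meas a) HX.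
have VEA_ge := cond_exp_variance_ge mZ Y2 A2 HEY HEA Hsuff VY vY0 CYA.
by split; last exact: sqr_correlation_mul_variance CYA VY VA vY0 vA0.
Qed.
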